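(* Let $G$ be a Carnot group with left-invariant (sub-)Riemannian metric $d$ defined by the left-invariant distribution $D$ with $D(e)=V$ and a left-invariant inner product $\langle\cdot,\cdot\rangle$ on $D$. If $G$ is non-commutative, write $\mathfrak{g}=\bigoplus_{k=1}^{l}\mathfrak{g}_k$ for the grading with $\mathfrak{g}_1=V$, $l\ge 2$, and take the left-invariant rigging $D^{\perp}$ with $D^{\perp}(e)=\bigoplus_{k=2}^{l}\mathfrak{g}_k$. Then $(G,d)$ has zero curvatures (Riemannian curvatures if $G$ is commutative, and Solov'ev sectional, Ricci and scalar curvatures of $(D,\langle\cdot,\cdot\rangle)$ with respect to $D^{\perp}$ otherwise).
   Context: A Carnot group is a Lie group $G$ with Lie algebra $\mathfrak{g}$ equipped with a one-parameter multiplicative group of automorphisms $\delta_s$, $s>0$, such that $V=\{v\in\mathfrak{g}: d\delta_s(v)=sv\}$ generates $\mathfrak{g}$ as a Lie algebra; then $\mathfrak{g}$ is graded nilpotent, $\mathfrak{g}=\bigoplus_{k=1}^l\mathfrak{g}_k$ with $\mathfrak{g}_1=V$ and $[\mathfrak{g}_i,\mathfrak{g}_j]\subset\mathfrak{g}_{i+j}$. Solov'ev curvatures: choose a left-invariant Riemannian metric $(\cdot,\cdot)$ with $(\cdot,\cdot)|_D=\langle\cdot,\cdot\rangle$ and $(D,D^\perp)=0$; let $\nabla$ be its Levi-Civita connection, $H,V$ the projections onto $D,D^\perp$, $\overline{\nabla}_XY=H\nabla_X(HY)+V\nabla_X(VY)$, $T$ its torsion and $\overline{R}$ its curvature. For $X,Y,Z,W$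 tangent to $D$, $(K(X,Y)Z,W)=(\overline{R}(X,Y)Z,W)-\tfrac12(T(X,Y),T(Z,W))$; sectional curvature $K_{uv}=(K(u,v)v,u)/(\|u\|^2\|v\|^2-(u,v)^2)$ for non-collinear $u,v\in D(p)$, Ricci and scalar curvatures are the corresponding sums over orthonormal bases of $D(p)$. *)

(* Carnot groups are treated through their Lie algebras:
   all objects in the statement (distribution, rigging, metric, connections,
   curvatures) are left-invariant, hence determined by their values on the
   Lie algebra g = T_e G, which we model as 'rV[R]_n with a Lie bracket. *)
From HB Require Import structures.
From mathcomp Require Import all_boot all_order all_algebra.
From mathcomp Require Import reals.
Unset Printing Implicit Defensive.
Import Order.TTheory GRing.Theory Num.Theory.
Local Open Scope ring_scope.

Section Defs.
Variables (R : realType) (n : nat).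
Notation vec := 'rV[R]_n.

Definition lie_bracket (br : vec -> vec -> vec) : Prop :=
  [/\ (forall a x y z, br (a *: x + y) z = a *: br x z + br y z),
      (forall x y, br x y = - br y x) &
      (forall x y z, br x (br y z) + br y (br z x) + br z (br x y) = 0)].

Definition stratification (br : vec -> vec -> vec) (l : nat) (g : nat -> 'M[R]_n) : Prop :=
  (0 < l)%N /\
  [/\ mxdirect (\sum_(1 <= k < l.+1) g k)%MS,
      (\sum_(1 <= k < l.+1) g k == 1%:M)%MS,
      (forall k, (l < k)%N -> g k = 0),
      (forall i j x y, (0 < i)%N -> (0 < j)%N ->
          (x <= g i)%MS -> (y <= g j)%MS -> (br x y <= g (i + j)%N)%MS) &
      (forall W : 'M[R]_n, (g 1%N <= W)%MS ->
          (forall x y, (x <= W)%MS -> (y <= W)%MS -> (br x y <= W)%MS) ->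
          (1%:M <= W)%MS)].

Definition inner_product_on (U : 'M[R]_n) (b : vec -> vec -> R) : Prop :=
  [/\ (forall a x y z, b (a *: x + y) z = a * b x z + b y z),
      (forall x y, b x y = b y x) &
      (forall x, (x <= U)%MS -> x != 0 -> 0 < b x x)].

(* Levi-Civita connection of the left-invariant metric m, evaluated on
   left-invariant vector fields: torsion free and metric *)
Definition levi_civita (br : vec -> vec -> vec) (m : vec -> vec -> R)
  (nab : vec -> vec -> vec) : Prop :=
  (forall x y, nab x y - nab y x = br x y) /\
  (forall x y z, m (nab x y) z + m y (nab x z) = 0).

Definition riem_curv (br : vec -> vec -> vec) (nab : vec -> vec -> vec) (x y z : vec) : vec :=
  nab x (nab y z) - nab y (nab x z) - nab (br x y) z.

Definition projection_along (U Dp : 'M[R]_n) (H : vec -> vec) : Prop :=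
  forall x, (H x <= U)%MS /\ (x - H x <= Dp)%MS.

(* nabla-bar X Y = H nab_X (H Y) + V nab_X (V Y), with V = id - H *)
Definition nabbar (H : vec -> vec) (nab : vec -> vec -> vec) (x y : vec) : vec :=
  H (nab x (H y)) + (nab x (y - H y) - H (nab x (y - H y))).

Definition torsion (br : vec -> vec -> vec) (H : vec -> vec) (nab : vec -> vec -> vec)
  (x y : vec) : vec :=
  nabbar H nab x y - nabbar H nab y x - br x y.

Definition solovev_form (br : vec -> vec -> vec) (m : vec -> vec -> R)
  (H : vec -> vec) (nab : vec -> vec -> vec) (x y z w : vec) : R :=
  m (riem_curv br (nabbar H nab) x y z) w
  - 2^-1 * m (torsion br H nab x y) (torsion br H nab z w).

(* generic sectional / Ricci / scalar curvatures of a (0,4)-form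
   Kf x y z w = (K(x,y)z, w) on the subspace U with inner product m *)
Definition noncollinear (u v : vec) : Prop := \rank (col_mx u v) = 2%N.

Definition sectional (m : vec -> vec -> R) (Kf : vec -> vec -> vec -> vec -> R) (u v : vec) : R :=
  Kf u v v u / (m u u * m v v - (m u v) ^+ 2).

Definition orthonormal_basis (U : 'M[R]_n) (m : vec -> vec -> R) (e : 'I_(\rank U) -> vec) : Prop :=
  (forall i, (e i <= U)%MS) /\ (forall i j, m (e i) (e j) = (i == j)%:R).

Definition ricci (U : 'M[R]_n) (Kf : vec -> vec -> vec -> vec -> R) (e : 'I_(\rank U) -> vec)
  (x y : vec) : R :=
  \sum_i Kf (e i) x y (e i).

Definition scalar_curv (U : 'M[R]_n) (Kf : vec -> vec -> vec -> vec -> R) (e : 'I_(\rank U) -> vec) : R :=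
  \sum_j ricci U Kf e (e j) (e j).

Definition zero_curvatures (U : 'M[R]_n) (m : vec -> vec -> R)
  (Kf : vec -> vec -> vec -> vec -> R) : Prop :=
  [/\ (forall u v, (u <= U)%MS -> (v <= U)%MS -> noncollinear u v -> sectional m Kf u v = 0),
      (forall e, orthonormal_basis U m e ->
          forall x y, (x <= U)%MS -> (y <= U)%MS -> ricci U Kf e x y = 0) &
      (forall e, orthonormal_basis U m e -> scalar_curv U Kf e = 0)].

End Defs.

Arguments lie_bracket {R n}.
Arguments stratification {R n}.
Arguments inner_product_on {R n}.
Arguments levi_civita {R n}.
Arguments riem_curv {R n}.
Arguments projection_along {R n}.
Arguments nabbar {R n}.
Arguments torsion {R n}.
Arguments solovev_form {R n}.
Arguments noncollinear {R n}.
Arguments sectional {R n}.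
Arguments orthonormal_basis {R n}.
Arguments ricci {R n}.
Arguments scalar_curv {R n}.
Arguments zero_curvatures {R n}.

(* All structures are left-invariant, so the Koszul formula computes the
   Levi-Civita connection from brackets alone.  If g is abelian, g_1 generates
   g = g_1 and the connection vanishes.  Otherwise, for X, Y, Z, W in g_1 the
   brackets [X,Y] and [[X,Y],Z] lie in the rigging g_2 (+) ... (+) g_l, which is
   orthogonal to g_1.  Hence the horizontal part of nabla_X Y vanishes, nabla-bar
   is zero on horizontal fields, and (Rbar(X,Y)Z, W) = -(nabla_[X,Y] Z, W)
   = -1/2 ([W,Z],[X,Y]) by Koszul, while T(X,Y) = -[X,Y].  The correction
   -1/2 (T(X,Y),T(Z,W)) = 1/2 ([W,Z],[X,Y]) cancels it exactly. *)
From HB Require Import structures.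
From mathcomp Require Import all_boot all_order all_algebra.
From mathcomp Require Import reals.
From mathcomp Require Import lra.
Set Implicit Arguments.
Unset Strict Implicit.
Import Order.TTheory GRing.Theory Num.Theory.
Local Open Scope ring_scope.

Section BilinearForm.
Variables (R : realType) (n : nat) (m : 'rV[R]_n -> 'rV[R]_n -> R).
Hypothesis mlin : forall a x y z, m (a *: x + y) z = a * m x z + m y z.
Hypothesis msym : forall x y, m x y = m y x.

Lemma formDl x y z : m (x + y) z = m x z + m y z.
Proof. by have := mlin 1 x y z; rewrite scale1r mul1r. Qed.

Lemma form0l z : m 0 z = 0.
Proof. by have := formDl 0 0 z; rewrite addr0 => h; lra. Qed.

Lemma formNl x z : m (- x) z = - m x z.
Proof. by have := formDl x (- x) z; rewrite subrr form0l => h; lra. Qed.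

Lemma formNr x z : m z (- x) = - m z x.
Proof. by rewrite msym formNl msym. Qed.

Lemma formBl x y z : m (x - y) z = m x z - m y z.
Proof. by rewrite formDl formNl. Qed.

Lemma form_anisotropic (U : 'M[R]_n) :
  (forall x, (x <= U)%MS -> x != 0 -> 0 < m x x) ->
  forall v, (v <= U)%MS -> m v v = 0 -> v = 0.
Proof.
move=> mpos v vU vv0; apply/eqP; apply: contraT => v_neq0.
by have := mpos v vU v_neq0; rewrite vv0 ltxx.
Qed.

Section LeviCivita.
Variables (br : 'rV[R]_n -> 'rV[R]_n -> 'rV[R]_n) (nab : 'rV[R]_n -> 'rV[R]_n -> 'rV[R]_n).
Hypothesis LC : levi_civita br m nab.

Lemma koszul x y z :
  2 * m (nab x y) z = m (br x y) z + m (br z y) x - m (br x z) y.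
Proof.
case: LC => torsion_free metric.
rewrite -!torsion_free !formBl.
have := metric x y z; have := metric z x y; have := metric y z x.
rewrite (msym y (nab x z)) (msym x (nab z y)) (msym z (nab y x)); lra.
Qed.

Hypothesis maniso : forall v, m v v = 0 -> v = 0.

Lemma levi_civita_x0 x : nab x 0 = 0.
Proof. by apply: maniso; have := LC.2 x 0 (nab x 0); rewrite form0l addr0. Qed.

Lemma levi_civita_abelian : (forall x y, br x y = 0) -> forall x y, nab x y = 0.
Proof.
move=> br0 x y; apply: maniso.
by have := koszul x y (nab x y); rewrite !br0 !form0l; lra.
Qed.

Section Rigging.
Variables (U Dp : 'M[R]_n) (H : 'rV[R]_n -> 'rV[R]_n).
Hypothesis orth : forall x y, (x <= U)%MS -> (y <= Dp)%MS -> m x y = 0.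
Hypothesis HP : projection_along U Dp H.

Lemma proj_id x : (x <= U)%MS -> H x = x.
Proof.
move=> xU; have [HxU xHxDp] := HP x; apply/eqP; rewrite eq_sym -subr_eq0.
apply/eqP/maniso/orth => //.
by rewrite addmx_sub // eqmx_opp.
Qed.

Lemma proj0 : H 0 = 0.
Proof. exact/proj_id/sub0mx. Qed.

Lemma form_projl v w : (w <= U)%MS -> m (H v) w = m v w.
Proof.
move=> wU; have [_ vHvDp] := HP v.
by rewrite -[in RHS](subrK (H v) v) formDl (msym (v - H v)) (orth wU vHvDp) add0r.
Qed.

Lemma nabbar_horizontal x y : (y <= U)%MS -> nabbar H nab x y = H (nab x y).
Proof.
by move=> yU; rewrite /nabbar (proj_id yU) subrr levi_civita_x0 proj0 subrr addr0.
Qed.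

Lemma nabbar_x0 x : nabbar H nab x 0 = 0.
Proof. by rewrite nabbar_horizontal ?sub0mx // levi_civita_x0 proj0. Qed.

Lemma koszul_horizontal x z w : (z <= U)%MS -> (w <= U)%MS ->
  (br x z <= Dp)%MS -> (br x w <= Dp)%MS -> 2 * m (nab x z) w = m (br w z) x.
Proof.
move=> zU wU xzDp xwDp.
rewrite koszul (msym (br x z)) (msym (br x w)).
by rewrite (orth wU xzDp) (orth zU xwDp); lra.
Qed.

Hypothesis brN : forall x y, br x y = - br y x.
Hypothesis bracket_rigging : forall x y, (x <= U)%MS -> (y <= U)%MS -> (br x y <= Dp)%MS.
Hypothesis bracket2_rigging : forall x y z, (x <= U)%MS -> (y <= U)%MS -> (z <= U)%MS ->
  (br (br x y) z <= Dp)%MS.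

Lemma nabbar_horizontal0 a b : (a <= U)%MS -> (b <= U)%MS -> nabbar H nab a b = 0.
Proof.
move=> aU bU; rewrite nabbar_horizontal //; set u := H (nab a b).
have uU : (u <= U)%MS by case: (HP (nab a b)).
apply: maniso; rewrite [in LHS]form_projl //.
have := koszul_horizontal bU uU (bracket_rigging aU bU) (bracket_rigging aU uU).
by rewrite (msym (br u b)) (orth aU (bracket_rigging uU bU)); lra.
Qed.

Lemma torsion_horizontal x y : (x <= U)%MS -> (y <= U)%MS ->
  torsion br H nab x y = - br x y.
Proof.
by move=> xU yU; rewrite /torsion !nabbar_horizontal0 // subrr sub0r.
Qed.

Lemma riem_curv_nabbar_horizontal x y z :
  (x <= U)%MS -> (y <= U)%MS -> (z <= U)%MS ->
  riem_curv br (nabbar H nab) x y z = - H (nab (br x y) z).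
Proof.
move=> xU yU zU; rewrite /riem_curv (nabbar_horizontal0 yU zU).
by rewrite (nabbar_horizontal0 xU zU) !nabbar_x0 subrr sub0r nabbar_horizontal.
Qed.

Lemma solovev_form_horizontal0 x y z w :
  (x <= U)%MS -> (y <= U)%MS -> (z <= U)%MS -> (w <= U)%MS ->
  solovev_form br m H nab x y z w = 0.
Proof.
move=> xU yU zU wU.
rewrite /solovev_form riem_curv_nabbar_horizontal // !torsion_horizontal //.
rewrite formNl form_projl // formNl formNr opprK.
have := koszul_horizontal zU wU (bracket2_rigging xU yU zU) (bracket2_rigging xU yU wU).
by rewrite (brN w z) formNl (msym (br z w)); lra.
Qed.

End Rigging.
End LeviCivita.
End BilinearForm.

Lemma zero_curvatures_of_form0 (R : realType) (n : nat) (U : 'M[R]_n)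
    (m : 'rV[R]_n -> 'rV[R]_n -> R) (Kf : 'rV[R]_n -> 'rV[R]_n -> 'rV[R]_n -> 'rV[R]_n -> R) :
  (forall x y z w, (x <= U)%MS -> (y <= U)%MS -> (z <= U)%MS -> (w <= U)%MS ->
     Kf x y z w = 0) ->
  zero_curvatures U m Kf.
Proof.
move=> K0; split.
- by move=> u v uU vU _; rewrite /sectional K0 // mul0r.
- by move=> e [eU _] x y xU yU; rewrite /ricci big1 // => i _; apply: K0.
- move=> e [eU _]; rewrite /scalar_curv big1 // => j _.
  by rewrite /ricci big1 // => i _; apply: K0.
Qed.

Section Stratification.
Variables (R : realType) (n : nat) (br : 'rV[R]_n -> 'rV[R]_n -> 'rV[R]_n).
Variables (l : nat) (g : nat -> 'M[R]_n).
Hypothesis strat : stratification br l g.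

Lemma stratification_abelian : (forall x y, br x y = 0) -> forall x : 'rV[R]_n, (x <= g 1%N)%MS.
Proof.
case: strat => _ [_ _ _ _ generates] br0 x.
apply: submx_trans (submx1 x) _; apply: generates => // a b _ _.
by rewrite br0; apply: sub0mx.
Qed.

Lemma stratum_sub_sum a k : (a <= k)%N -> (g k <= \sum_(a <= i < l.+1) g i)%MS.
Proof.
case: strat => _ [_ _ g_gt_l _ _] ak; have [kl | lk] := leqP k l; last first.
  by rewrite g_gt_l //; apply: sub0mx.
by rewrite big_geq_mkord; apply: (sumsmx_sup (Ordinal (kl : (k < l.+1)%N))).
Qed.

Lemma stratification_bracket_sub a i j x y : (0 < i)%N -> (0 < j)%N -> (a <= i + j)%N ->
  (x <= g i)%MS -> (y <= g j)%MS -> (br x y <= \sum_(a <= k < l.+1) g k)%MS.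
Proof.
case: strat => _ [_ _ _ graded _] i0 j0 aij xg yg.
exact: submx_trans (graded i j x y i0 j0 xg yg) (stratum_sub_sum aij).
Qed.

End Stratification.

Theorem corollary2 (R : realType) (n : nat) (br : 'rV[R]_n -> 'rV[R]_n -> 'rV[R]_n)
  (l : nat) (g : nat -> 'M[R]_n) (ip : 'rV[R]_n -> 'rV[R]_n -> R) :
  lie_bracket br -> stratification br l g -> inner_product_on (g 1%N) ip ->
  (* commutative case: Riemannian curvatures of <,> vanish *)
  ((forall x y, br x y = 0) ->
     forall nab, levi_civita br ip nab ->
     zero_curvatures (g 1%N) ip
       (fun x y z w => ip (riem_curv br nab x y z) w))
  /\
  (* non-commutative case: Solov'ev curvatures w.r.t. the rigging
     D^perp(e) = g_2 (+) ... (+) g_l vanish, for any admissible metric *)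
  (~ (forall x y, br x y = 0) ->
     forall (m : 'rV[R]_n -> 'rV[R]_n -> R),
     inner_product_on 1%:M m ->
     (forall x y, (x <= g 1%N)%MS -> (y <= g 1%N)%MS -> m x y = ip x y) ->
     (forall x y, (x <= g 1%N)%MS -> (y <= (\sum_(2 <= k < l.+1) g k))%MS -> m x y = 0) ->
     forall nab, levi_civita br m nab ->
     forall H, projection_along (g 1%N) (\sum_(2 <= k < l.+1) g k)%MS H ->
     zero_curvatures (g 1%N) m (solovev_form br m H nab)).
Proof.
move=> [_ brN _] strat [iplin ipsym ippos]; split.
- move=> br0 nab LC; apply: zero_curvatures_of_form0 => x y z w _ _ _ _.
  have ip_aniso v : ip v v = 0 -> v = 0.
    exact: (form_anisotropic ippos (stratification_abelian strat br0 v)).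
  rewrite /riem_curv !(levi_civita_abelian iplin ipsym LC ip_aniso br0).
  by rewrite !subrr (form0l iplin).
- move=> _ m [mlin msym mpos] _ orth nab LC H HP.
  have m_aniso v : m v v = 0 -> v = 0.
    exact: (form_anisotropic mpos (submx1 v)).
  apply: zero_curvatures_of_form0 => x y z w xU yU zU wU.
  apply: (solovev_form_horizontal0 mlin msym LC m_aniso orth HP brN) => //.
  + by move=> a b aU bU; apply: (stratification_bracket_sub strat (i:=1) (j:=1)).
  + move=> a b c aU bU cU; apply: (stratification_bracket_sub strat (i:=2) (j:=1)) => //.
    by case: strat => _ [_ _ _ graded _]; apply: (graded 1%N 1%N).
Qed.
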